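(* Let $A$ be a noetherian ring, $M$ a finitely generated $A$-module, $F$ a finitely generated free $A$-module and $M\to F$ a versal map. Then the induced homomorphism of graded $A$-algebras $\Gamma(M^\ast)^\vee\to\Gamma(F^\ast)^\vee$ (the degreewise dual of $\Gamma(F^\ast)\to\Gamma(M^\ast)$, which is induced by the dual map $F^\ast\to M^\ast$) is injective.
   Context: $N^\ast=\operatorname{Hom}_A(N,A)$. A homomorphism $\phi\colon M\to F$ with $F$ finitely generated and free is versal if every homomorphism $M\to E$ with $E$ a free $A$-module factors as $h\circ\phi$ for some $h\colon F\to E$. The algebra of divided powers $\Gamma(N)$ of an $A$-module $N$ is $A[X(n,x)]_{(n,x)\in\mathbb{N}\times N}$ modulo the ideal generated by $X(0,x)-1$, $X(n,fx)-f^nX(n,x)$, $X(m,x)X(n,x)-\binom{m+n}{m}X(m+n,x)$, and $X(n,x+y)-\sum_{i+j=n}X(i,x)X(j,y)$, graded with $X(n,x)$ in degree $n$. The graded dual $\Gamma(N)^\vee=\bigoplus_n\operatorname{Hom}_A(\Gamma^n(N),A)$ is a graded $A$-algebra with product $(u\bullet v)(\gamma)=(u\otimes v)(\Delta(\gamma))$, where $\Delta$ is the comultiplication induced by the diagonal $N\to N\oplus N$. *)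

From HB Require Import structures.
From mathcomp Require Import all_boot all_order all_algebra.
Set Implicit Arguments. Unset Strict Implicit. Unset Printing Implicit Defensive.
Import GRing.Theory.
Local Open Scope ring_scope.

Section Defs.
Variable A : comPzRingType.

Definition is_ideal (I : A -> Prop) : Prop :=
  [/\ I 0, (forall x y, I x -> I y -> I (x + y)) & (forall a x, I x -> I (a * x))].

Definition ideal_fin_gen (I : A -> Prop) : Prop :=
  exists s : seq A, forall x,
    I x <-> exists c : 'I_(size s) -> A, x = \sum_(i < size s) c i * s`_i.

Definition noetherian_ring : Prop := forall I, is_ideal I -> ideal_fin_gen I.

Definition fin_gen (M : lmodType A) : Prop :=
  exists s : seq M, forall x : M,
    exists c : 'I_(size s) -> A, x = \sum_(i < size s) c i *: s`_i.

Definition free_module (M : lmodType A) : Prop :=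
  exists (I : Type) (b : I -> M),
    (forall x : M, exists (k : nat) (idx : 'I_k -> I) (c : 'I_k -> A),
        x = \sum_(i < k) c i *: b (idx i)) /\
    (forall (k : nat) (idx : 'I_k -> I) (c : 'I_k -> A),
        injective idx -> \sum_(i < k) c i *: b (idx i) = 0 -> forall i, c i = 0).

Definition versal (M F : lmodType A) (phi : {linear M -> F}) : Prop :=
  fin_gen F /\ free_module F /\
  forall (E : lmodType A), free_module E ->
    forall g : {linear M -> E}, exists h : {linear F -> E},
      forall x, g x = h (phi x).

Record dual (M : lmodType A) := Dual {
  dfun :> M -> A;
  dfunP : forall a x y, dfun (a *: x + y) = a * dfun x + dfun y }.

Section DualOps.
Variable M : lmodType A.

Definition dual_add (f g : dual M) : dual M.
Proof.
refine (@Dual M (fun x => f x + g x) _).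
by move=> a x y; rewrite !dfunP mulrDr addrACA.
Defined.

Definition dual_scale (c : A) (f : dual M) : dual M.
Proof.
refine (@Dual M (fun x => c * f x) _).
by move=> a x y; rewrite dfunP mulrDr mulrCA.
Defined.
End DualOps.

Definition dual_map (M F : lmodType A) (phi : {linear M -> F}) (l : dual F) : dual M.
Proof.
refine (@Dual M (fun x => l (phi x)) _).
by move=> a x y; rewrite linearP dfunP.
Defined.

(** The polynomial algebra A[X(n,x)] is presented as the free
    (noncommutative) algebra on the symbols X(n,x), modulo commutators; words in
    the symbols are [seq (nat * N)], and elements are formal A-combinations of
    words [seq (A * word)]. *)
Section Gamma.
Variables (N : Type) (nadd : N -> N -> N) (nscale : A -> N -> N).

Definition word := seq (nat * N).
Definition fpoly := seq (A * word).

Definition wdeg (w : word) : nat := \sum_(p <- w) p.1.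

(** generators of the defining ideal of Gamma(N) (plus commutators) *)
Inductive gamma_rel : fpoly -> Prop :=
  | rel_comm (p q : nat * N) :
      gamma_rel [:: (1, [:: p; q]); (-1, [:: q; p])]
  | rel_zero (x : N) :
      gamma_rel [:: (1, [:: (0%N, x)]); (-1, [::])]
  | rel_scale (n : nat) (f : A) (x : N) :
      gamma_rel [:: (1, [:: (n, nscale f x)]); (- f ^+ n, [:: (n, x)])]
  | rel_mul (m n : nat) (x : N) :
      gamma_rel [:: (1, [:: (m, x); (n, x)]); (- ('C(m + n, m))%:R, [:: ((m + n)%N, x)])]
  | rel_add (n : nat) (x y : N) :
      gamma_rel ((1, [:: (n, nadd x y)])
                 :: [seq (-1, [:: (i, x); ((n - i)%N, y)]) | i <- iota 0 n.+1]).

Definition eval_form (u : word -> A) (r : fpoly) : A := \sum_(t <- r) t.1 * u t.2.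

(** [u] (values on words) defines an element of Hom_A(Gamma^n(N), A):
    it vanishes on words of degree <> n and on the (two-sided) ideal
    generated by the relations. *)
Definition gamma_dual (n : nat) (u : word -> A) : Prop :=
  (forall w, wdeg w <> n -> u w = 0) /\
  (forall (w1 w2 : word) (r : fpoly), gamma_rel r ->
     eval_form u [seq (t.1, w1 ++ t.2 ++ w2) | t <- r] = 0).
End Gamma.

Definition gamma_map (M F : lmodType A) (phi : {linear M -> F})
  (w : word (dual F)) : word (dual M) :=
  [seq (p.1, dual_map phi p.2) | p <- w].

End Defs.

(* Versality of [phi] tested against the free module [A] says that every linear
   form on [M] factors through [phi], i.e. the dual map [F^dual -> M^dual] is
   surjective.  Hence so is the induced map on the words generating
   [Gamma(F^dual) -> Gamma(M^dual)], and a form on [Gamma(M^dual)] is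
   determined by its pullback to [Gamma(F^dual)]. *)
From HB Require Import structures.
From mathcomp Require Import all_boot all_order all_algebra.
From Stdlib Require Import ProofIrrelevance FunctionalExtensionality.
Local Open Scope ring_scope.
Import GRing.Theory.

Section DualForm.
Variables (A : comPzRingType) (M : lmodType A) (l : dual M).

Definition dual_form : M -> A^o := dfun l.

Lemma dual_form_linear : linear dual_form.
Proof. by move=> a x y; rewrite /dual_form dfunP. Qed.

HB.instance Definition _ :=
  GRing.isLinear.Build A M A^o *:%R dual_form dual_form_linear.
End DualForm.

Lemma dual_ext (A : comPzRingType) (M : lmodType A) (f g : dual M) :
  f =1 g -> f = g.
Proof.
case: f g => f fP [g gP] /= /functional_extensionality fg; subst g.
by rewrite (proof_irrelevance _ fP gP).
Qed.

Lemma regular_free (A : comPzRingType) : free_module (A^o : lmodType A).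
Proof.
exists unit, (fun _ => (1 : A^o)); split.
  move=> x; exists 1%N, (fun _ => tt), (fun _ => x).
  by rewrite big_ord1 /= [_ *: _]mulr1.
move=> [|[|k]] idx c idx_inj.
- by move=> _ [].
- by rewrite big_ord1 => c0 i; rewrite ord1 -[c ord0]mulr1.
- have : idx ord0 = idx (lift ord0 ord0) by case: (idx _); case: (idx _).
  by move/idx_inj.
Qed.

Lemma versal_dual_map_surj {A : comPzRingType} {M F : lmodType A}
    {phi : {linear M -> F}} :
  versal phi -> forall l : dual M, exists l' : dual F, dual_map phi l' = l.
Proof.
move=> [_ [_ phi_versal]] l.
have [h lE] := phi_versal _ (regular_free A) (@dual_form A M l : {linear M -> A^o}).
have hP a x y : (h : F -> A) (a *: x + y) = a * h x + h y by rewrite linearP.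
by exists (Dual hP); apply: dual_ext => x /=; rewrite -lE.
Qed.

Lemma gamma_map_surj {A : comPzRingType} {M F : lmodType A}
    {phi : {linear M -> F}} :
  (forall l : dual M, exists l' : dual F, dual_map phi l' = l) ->
  forall w : word (dual M), exists w' : word (dual F), gamma_map phi w' = w.
Proof.
move=> dual_map_surj; elim=> [|[k l] w [w' <-]]; first by exists [::].
by have [l' <-] := dual_map_surj l; exists ((k, l') :: w').
Qed.

Theorem lemma4p1 (A : comPzRingType) (M F : lmodType A) (phi : {linear M -> F}) :
  noetherian_ring A -> fin_gen M -> fin_gen F -> free_module F -> versal phi ->
  forall (n : nat) (u v : word (dual M) -> A),
    gamma_dual (@dual_add A M) (@dual_scale A M) n u ->
    gamma_dual (@dual_add A M) (@dual_scale A M) n v ->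
    (forall w : word (dual F), u (gamma_map phi w) = v (gamma_map phi w)) ->
    forall w : word (dual M), u w = v w.
Proof.
move=> _ _ _ _ phi_versal n u v _ _ uv w.
have [w' <-] := gamma_map_surj (versal_dual_map_surj phi_versal) w.
exact: uv.
Qed.
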